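(* Let $\Omega\subset\mathbb{R}^d$ be an open set and let $(g^{ij})_{1\le i,j\le d}$ be a symmetric matrix of functions on $\Omega$ which is positive definite at every point of $\Omega$ and such that every entry $g^{ij}$ is a polynomial in $(x_1,\dots,x_d)$ of degree at most $2$. Write $\Gamma(f,g)=\sum_{i,j} g^{ij}\partial_i f\,\partial_j g$. Let $P_1,\dots,P_n$ be polynomials which are positive on $\Omega$ and such that for every $r\in\{1,\dots,n\}$ and every $i\in\{1,\dots,d\}$, $$\Gamma(x_i,\log P_r)=\sum_{j} g^{ij}\,\partial_j \log P_r = L_{i,r},$$ where each $L_{i,r}$ is a polynomial of degree at most $1$. For $(\alpha_1,\dots,\alpha_n)\in\mathbb{R}^n$, let $\rho=P_1^{\alpha_1}\cdots P_n^{\alpha_n}$ and let $\mathcal{L}_{\alpha_1,\dots,\alpha_n}$ be the operator on smooth functions on $\Omega$ given by $$\mathcal{L}_{\alpha_1,\dots,\alpha_n} f=\frac{1}{\rho}\sum_{i,j}\partial_i\big(\rho\, g^{ij}\partial_j f\big)=\sum_{i,j}g^{ij}\partial^2_{ij}f+\sum_i b^i\partial_i f,\qquad b^i=\sum_j\big(\partial_j g^{ij}+g^{ij}\partial_j\log\rho\big).$$ Then there exist constants $c_1,\dots,c_n$ (not depending on the $\alpha$'s) such that for every $(\alpha_1,\dots,\alpha_n)$ the function $h=P_1^{-\alpha_1}\cdots P_n^{-\alpha_n}$ satisfies $$\mathcal{L}_{\alpha_1,\dots,\alpha_n}(h)=-\Big(\sum_{r}\alpha_r c_r\Big)h,$$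 and moreover the $h$-transform of $\mathcal{L}_{\alpha_1,\dots,\alpha_n}$ by $h$ equals $\mathcal{L}_{-\alpha_1,\dots,-\alpha_n}$.
   Context: $\mathcal{L}_{\alpha_1,\dots,\alpha_n}$ is the symmetric diffusion operator associated with the carré du champ $\Gamma$ and the measure $\mu_{\alpha_1,\dots,\alpha_n}$ with density $P_1^{\alpha_1}\cdots P_n^{\alpha_n}$ with respect to Lebesgue measure on $\Omega$. For a diffusion operator $\mathcal{L}$ and a positive function $h$ with $\mathcal{L}(h)=\lambda h$ for a constant $\lambda$, the $h$-transform of $\mathcal{L}$ is the operator $\mathcal{L}^{(h)}(f)=\frac{1}{h}\mathcal{L}(hf)-\lambda f$ (equivalently $\mathcal{L}^{(h)}f=\mathcal{L}f+2\Gamma(\log h,f)$). *)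

From HB Require Import structures.
From mathcomp Require Import all_boot all_order all_algebra.
From mathcomp Require Import all_classical all_reals all_analysis.
Set Implicit Arguments. Unset Strict Implicit. Unset Printing Implicit Defensive.
Import Order.TTheory GRing.Theory Num.Theory.
Import numFieldNormedType.Exports.
Local Open Scope ring_scope.
Local Open Scope classical_set_scope.

(* Points of R^d are row vectors 'rV[R]_d; the i-th coordinate of x is x 0 i. *)
Section Defs.
Variables (R : realType) (d : nat).
Local Notation V := 'rV[R]_d.

Definition unitv (i : 'I_d) : V := delta_mx 0 i.
Definition partial (i : 'I_d) (f : V -> R) : V -> R :=
  fun x => 'D_(unitv i) f x.

Fixpoint ipartial (s : seq 'I_d) (f : V -> R) : V -> R :=
  if s is i :: s' then partial i (ipartial s' f) else f.

Definition smooth_on (Omega : set V) (f : V -> R) :=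
  forall (s : seq 'I_d) (x : V), Omega x -> differentiable (ipartial s f) x.

Definition poly_deg_le (m : nat) (f : V -> R) :=
  exists (N : nat) (c : 'I_N -> R) (e : 'I_N -> 'I_d -> nat),
    (forall k, (\sum_(i < d) e k i <= m)%N) /\
    forall x : V, f x = \sum_(k < N) c k * \prod_(i < d) x 0 i ^+ e k i.

Definition poly_fun (f : V -> R) := exists m, poly_deg_le m f.

Definition carre_du_champ (g : 'I_d -> 'I_d -> V -> R) (f h : V -> R) : V -> R :=
  fun x => \sum_(i < d) \sum_(j < d) g i j x * partial i f x * partial j h x.

Definition rho_of (n : nat) (P : 'I_n -> V -> R) (alpha : 'I_n -> R) : V -> R :=
  fun x => \prod_(r < n) (P r x) `^ (alpha r).

Definition drift (g : 'I_d -> 'I_d -> V -> R) (rho : V -> R) (i : 'I_d) : V -> R :=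
  fun x => \sum_(j < d)
     (partial j (g i j) x + g i j x * partial j (fun y => ln (rho y)) x).

Definition Lop (g : 'I_d -> 'I_d -> V -> R) (n : nat) (P : 'I_n -> V -> R)
    (alpha : 'I_n -> R) (f : V -> R) : V -> R :=
  fun x => \sum_(i < d) \sum_(j < d) g i j x * partial i (partial j f) x
         + \sum_(i < d) drift g (rho_of P alpha) i x * partial i f x.

(* h-transform of an operator L by h with L h = lambda h:
   L^(h) f = (1/h) L (h f) - lambda f *)
Definition htransform (L : (V -> R) -> V -> R) (h : V -> R) (lambda : R)
    (f : V -> R) : V -> R :=
  fun x => L (fun y => h y * f y) x / h x - lambda * f x.

End Defs.

(* Write [ell a = \sum_r a_r log P_r], so that [Lop a f = L0 f + Gamma(f, ell a)] on Omega,
   where [L0] has drift [\sum_j d_j g^{ij}].  Since [Gamma(x_i, log P_r) = L_{i,r}] is affine,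
   the divergence form [L0 u = \sum_i d_i Gamma(x_i, u)] shows that [L0 (log P_r)] is a
   constant [c_r].  For [h = exp(- ell a)] the chain rule gives
   [Lop a h = h (Lop a (- ell a) + Gamma(ell a, ell a)) = - h L0 (ell a) = - (\sum_r a_r c_r) h],
   and the Leibniz rule shows that the h-transform of [Lop a] is
   [Lop a + 2 Gamma(log h, .) = L0 - Gamma(., ell a) = Lop (- a)]. *)

From HB Require Import structures.
From mathcomp Require Import all_boot all_order all_algebra.
From mathcomp Require Import all_classical all_reals all_analysis.
From mathcomp Require Import ring.
Set Implicit Arguments. Unset Strict Implicit. Unset Printing Implicit Defensive.
Import Order.TTheory GRing.Theory Num.Theory.
Import numFieldNormedType.Exports.
Local Open Scope ring_scope.
Local Open Scope classical_set_scope.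

Section second_order_jets.
Variables (R : comPzRingType) (d : nat).
Implicit Types (G H : 'I_d -> 'I_d -> R) (B D U W : 'I_d -> R).

(* A second-order operator with diffusion [G] and drift [B], applied to a 2-jet:
   [H] stands for the Hessian and [D] for the gradient of a function at a point. *)
Definition jetop G B H D : R :=
  \sum_(i < d) \sum_(j < d) G i j * H i j + \sum_(i < d) B i * D i.

Lemma eq_jetop G B H H' D D' : (forall i j, H i j = H' i j) -> (forall i, D i = D' i) ->
  jetop G B H D = jetop G B H' D'.
Proof.
move=> HH' DD'; congr (_ + _); apply: eq_bigr => i _; last by rewrite DD'.
by apply: eq_bigr => j _; rewrite HH'.
Qed.

Lemma jetopD G B H1 H2 D1 D2 :
  jetop G B (fun i j => H1 i j + H2 i j) (fun i => D1 i + D2 i) =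
  jetop G B H1 D1 + jetop G B H2 D2.
Proof.
rewrite /jetop [RHS]addrACA; congr (_ + _); rewrite -big_split; apply: eq_bigr => i _ /=.
  by rewrite -big_split; apply: eq_bigr => j _; rewrite mulrDr.
by rewrite mulrDr.
Qed.

Lemma jetopZ G B c H D :
  jetop G B (fun i j => c * H i j) (fun i => c * D i) = c * jetop G B H D.
Proof.
rewrite /jetop mulrDr !mulr_sumr; congr (_ + _); apply: eq_bigr => i _.
  by rewrite mulr_sumr; apply: eq_bigr => j _; rewrite mulrCA.
by rewrite mulrCA.
Qed.

Lemma jetop0 G B H : jetop G B H (fun=> 0) = \sum_(i < d) \sum_(j < d) G i j * H i j.
Proof. by rewrite /jetop [X in _ + X]big1 ?addr0 // => i _; rewrite mulr0. Qed.

Lemma jetop_cross G B U W : (forall i j, G i j = G j i) ->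
  jetop G B (fun i j => U i * W j + U j * W i) (fun=> 0) =
  (\sum_(i < d) \sum_(j < d) G i j * U i * W j) *+ 2.
Proof.
move=> Gsym; rewrite jetop0 mulr2n -[X in _ + X]exchange_big -big_split.
apply: eq_bigr => i _ /=; rewrite -big_split; apply: eq_bigr => j _ /=.
by rewrite Gsym mulrDr !mulrA.
Qed.

(* The 2-jet of a product, in the shape produced by [partial2M] and [partialM]. *)
Lemma jetopM G B Hf Df Hh Dh a c : (forall i j, G i j = G j i) ->
  jetop G B (fun i j => a * Hh i j + Dh j * Df i + (c * Hf i j + Df j * Dh i))
          (fun i => a * Dh i + c * Df i) =
  a * jetop G B Hh Dh + c * jetop G B Hf Df +
  (\sum_(i < d) \sum_(j < d) G i j * Df i * Dh j) *+ 2.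
Proof.
move=> Gsym.
rewrite (@eq_jetop _ _ _ (fun i j => (a * Hh i j + c * Hf i j) + (Df i * Dh j + Df j * Dh i))
                 _ (fun i => (a * Dh i + c * Df i) + 0)); last 2 first.
- by move=> i j; ring.
- by move=> i; rewrite addr0.
by rewrite !jetopD !jetopZ jetop_cross.
Qed.

Lemma jetop_exp G B Hu Du c :
  jetop G B (fun i j => c * Hu i j + Du j * (c * Du i)) (fun i => c * Du i) =
  c * (jetop G B Hu Du + \sum_(i < d) \sum_(j < d) G i j * Du i * Du j).
Proof.
rewrite (@eq_jetop _ _ _ (fun i j => c * (Hu i j + Du i * Du j))
                 _ (fun i => c * (Du i + 0))); last 2 first.
- by move=> i j; ring.
- by move=> i; rewrite addr0.
rewrite jetopZ jetopD jetop0; congr (_ * (_ + _)).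
by apply: eq_bigr => i _; apply: eq_bigr => j _; rewrite mulrA.
Qed.

Lemma jetop_div G (Gd : 'I_d -> 'I_d -> 'I_d -> R) H D :
  (forall k i j, Gd k i j = Gd k j i) ->
  \sum_(i < d) \sum_(j < d) (G i j * H i j + D j * Gd i i j) =
  jetop G (fun i => \sum_(j < d) Gd j i j) H D.
Proof.
move=> Gdsym; under eq_bigr => i _ do rewrite big_split.
rewrite big_split /=; congr (_ + _).
rewrite exchange_big; apply: eq_bigr => i _; rewrite mulr_suml.
by apply: eq_bigr => j _; rewrite Gdsym mulrC.
Qed.
End second_order_jets.

Section directional_chain_rule.
Variables (R : realType) (U : normedModType R).

Lemma is_derive_line (f : U -> R) (x v : U) (df : R) :
  is_derive x v f df <-> is_derive (0 : R^o) 1 (fun t : R^o => f (t *: v + x)) df.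
Proof.
have DE : 'D_v f x = 'D_1 (fun t : R^o => f (t *: v + x)) 0.
  rewrite /derive; set g1 := fun h => h^-1 *: _; set g2 := fun h => h^-1 *: _.
  suff -> : g1 = g2 by [].
  by apply/funext => h; rewrite /g1 /g2 /= addr0 scale0r add0r [_%:A]mulr1.
by split=> -[fd <-]; split; rewrite ?DE //;
  [exact: (derivable1P _ _ _).1 fd | exact: (derivable1P _ _ _).2 fd].
Qed.

Lemma is_derive_comp (G : R -> R) (u : U -> R) (x v : U) (du dG : R) :
  is_derive x v u du -> is_derive (u x) 1 G dG ->
  is_derive x v (G \o u) (dG * du).
Proof.
move=> /is_derive_line ud.
have -> : u x = u (0 *: v + x) by rewrite scale0r add0r.
move=> Gd.
exact/is_derive_line/(is_derive1_comp Gd ud).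
Qed.
End directional_chain_rule.

Lemma is_derive_coord (R : realType) (d : nat) (x v : 'rV[R]_d) (j : 'I_d) :
  is_derive x v (fun y => y 0 j) (v 0 j).
Proof.
apply/is_derive_line.
have -> : (fun t : R^o => (t *: v + x) 0 j) = id * cst (v 0 j) + cst (x 0 j).
  by apply/funext => t; rewrite !mxE.
by apply: is_derive_eq; rewrite scaler0 add0r addr0 [_%:A]mulr1.
Qed.

Section pointwise_derivatives.
Variables (R : realType) (U : normedModType R).
Implicit Types (f : U -> R) (x v : U).

Lemma is_derive_sum_fun n (F : 'I_n -> U -> R) x v (dF : 'I_n -> R) :
  (forall r, is_derive x v (F r) (dF r)) ->
  is_derive x v (fun y => \sum_(r < n) F r y) (\sum_(r < n) dF r).
Proof. by move=> Fd; rewrite -(fct_sumE _ _ F); apply: is_derive_sum. Qed.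

Lemma is_derive_lincomb n (b : 'I_n -> R) (F : 'I_n -> U -> R) x v (dF : 'I_n -> R) :
  (forall r, is_derive x v (F r) (dF r)) ->
  is_derive x v (fun y => \sum_(r < n) b r * F r y) (\sum_(r < n) b r * dF r).
Proof.
by move=> Fd; apply: is_derive_sum_fun => r; apply: is_deriveZ.
Qed.

End pointwise_derivatives.

Section partial_derivatives.
Variables (R : realType) (d : nat).
Local Notation V := 'rV[R]_d.
Implicit Types (f h : V -> R) (g : 'I_d -> 'I_d -> V -> R) (x : V).

Lemma partialE f j x (df : R) : is_derive x (unitv R j) f df -> partial j f x = df.
Proof. by case. Qed.

Lemma partialD f h j x :
  derivable f x (unitv R j) -> derivable h x (unitv R j) ->
  partial j (fun y => f y + h y) x = partial j f x + partial j h x.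
Proof. exact: deriveD. Qed.

Lemma partialM f h j x :
  derivable f x (unitv R j) -> derivable h x (unitv R j) ->
  partial j (fun y => f y * h y) x = f x * partial j h x + h x * partial j f x.
Proof. exact: deriveM. Qed.

Lemma partial_lincomb n (b : 'I_n -> R) (F : 'I_n -> V -> R) j x :
  (forall r, derivable (F r) x (unitv R j)) ->
  partial j (fun y => \sum_(r < n) b r * F r y) x = \sum_(r < n) b r * partial j (F r) x.
Proof. by move=> Fd; apply/partialE/is_derive_lincomb => r; apply: derivableP. Qed.

Lemma partial_coord i k x : partial k (fun y : V => y 0 i) x = (i == k)%:R.
Proof. by rewrite (partialE (is_derive_coord x _ i)) /unitv mxE eqxx. Qed.

Lemma carre_du_champ_coord g i f :
  carre_du_champ g (fun y => y 0 i) f = fun x => \sum_(j < d) g i j x * partial j f x.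
Proof.
apply/funext => x; rewrite /carre_du_champ (bigD1 i) //= [X in _ + X]big1 ?addr0.
  by apply: eq_bigr => j _; rewrite partial_coord eqxx mulr1.
by move=> k ki; apply: big1 => j _; rewrite partial_coord eq_sym (negbTE ki) mulr0 mul0r.
Qed.

Lemma carre_du_champC g f h x : (forall i j, g i j x = g j i x) ->
  carre_du_champ g f h x = carre_du_champ g h f x.
Proof.
move=> gsym; rewrite /carre_du_champ exchange_big; apply: eq_bigr => i _.
by apply: eq_bigr => j _; rewrite gsym mulrAC.
Qed.

End partial_derivatives.

Section polynomial_functions.
Variables (R : realType) (d : nat).
Local Notation V := 'rV[R]_d.
Implicit Types (f : V -> R) (x v : V).

Inductive polyexpr : (V -> R) -> Prop :=
| polyexpr_cst c : polyexpr (fun _ => c)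
| polyexpr_coord i : polyexpr (fun y => y 0 i)
| polyexprD f1 f2 : polyexpr f1 -> polyexpr f2 -> polyexpr (fun y => f1 y + f2 y)
| polyexprM f1 f2 : polyexpr f1 -> polyexpr f2 -> polyexpr (fun y => f1 y * f2 y).

Lemma polyexpr_derivable f x v : polyexpr f -> derivable f x v.
Proof.
elim=> [c|i|f1 f2 _ d1 _ d2|f1 f2 _ d1 _ d2].
- exact: derivable_cst.
- by case: (is_derive_coord x v i).
- exact: derivableD d1 d2.
- exact: derivableM d1 d2.
Qed.

Lemma polyexpr_partial f j : polyexpr f -> polyexpr (partial j f).
Proof.
elim=> [c|i|f1 f2 p1 q1 p2 q2|f1 f2 p1 q1 p2 q2].
- have -> : partial j (fun _ : V => c) = fun _ => 0.
    by apply/funext => x; exact: derive_cst.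
  exact: polyexpr_cst.
- have -> : partial j (fun y : V => y 0 i) = fun _ => (i == j)%:R.
    by apply/funext => x; exact: partial_coord.
  exact: polyexpr_cst.
- have -> : partial j (fun y => f1 y + f2 y) = fun y => partial j f1 y + partial j f2 y.
    by apply/funext => x; apply: partialD; exact: polyexpr_derivable.
  exact: polyexprD.
- have -> : partial j (fun y => f1 y * f2 y) =
            fun y => f1 y * partial j f2 y + f2 y * partial j f1 y.
    by apply/funext => x; apply: partialM; exact: polyexpr_derivable.
  exact: polyexprD (polyexprM p1 q2) (polyexprM p2 q1).
Qed.

Lemma polyexpr_sum (I : Type) (s : seq I) (F : I -> V -> R) :
  (forall k, polyexpr (F k)) -> polyexpr (fun y => \sum_(k <- s) F k y).
Proof.
move=> PF; elim: s => [|a s IH].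
  have -> : (fun y => \sum_(k <- [::]) F k y) = fun _ => 0.
    by apply/funext => y; rewrite big_nil.
  exact: polyexpr_cst.
have -> : (fun y => \sum_(k <- a :: s) F k y) = fun y => F a y + \sum_(k <- s) F k y.
  by apply/funext => y; rewrite big_cons.
exact: polyexprD.
Qed.

Lemma polyexpr_prod (I : Type) (s : seq I) (F : I -> V -> R) :
  (forall k, polyexpr (F k)) -> polyexpr (fun y => \prod_(k <- s) F k y).
Proof.
move=> PF; elim: s => [|a s IH].
  have -> : (fun y => \prod_(k <- [::]) F k y) = fun _ => 1.
    by apply/funext => y; rewrite big_nil.
  exact: polyexpr_cst.
have -> : (fun y => \prod_(k <- a :: s) F k y) = fun y => F a y * \prod_(k <- s) F k y.
  by apply/funext => y; rewrite big_cons.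
exact: polyexprM.
Qed.

Lemma polyexpr_coordX i m : polyexpr (fun y : V => y 0 i ^+ m).
Proof.
elim: m => [|m IH]; first exact: polyexpr_cst.
have -> : (fun y : V => y 0 i ^+ m.+1) = fun y => y 0 i * y 0 i ^+ m.
  by apply/funext => y; rewrite exprS.
exact: polyexprM (polyexpr_coord i) IH.
Qed.

Lemma poly_deg_le_polyexpr m f : poly_deg_le m f -> polyexpr f.
Proof.
case=> N [c [e [_ fE]]].
have -> : f = fun x => \sum_(k < N) c k * \prod_(i < d) x 0 i ^+ e k i by apply/funext.
apply: polyexpr_sum => k; apply: polyexprM; first exact: polyexpr_cst.
by apply: polyexpr_prod => i; exact: polyexpr_coordX.
Qed.

Lemma prod_exprn_le1 (I : eqType) (s : seq I) (z : I -> R) (e : I -> nat) :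
  (\sum_(i <- s) e i <= 1)%N ->
  \prod_(i <- s) z i ^+ e i = 1 + \sum_(i <- s) (e i)%:R * (z i - 1).
Proof.
elim: s => [|a s IH]; first by rewrite !big_nil addr0.
rewrite !big_cons; case: (e a) => [|[|m]].
- by rewrite add0n => /IH ->; rewrite expr0 mul1r mul0r add0r.
- rewrite add1n ltnS leqn0 sum_nat_seq_eq0 => /allP e0.
  rewrite !big1_seq => [|i /andP[_ /e0 /eqP ->]|i /andP[_ /e0 /eqP ->]] //.
    by rewrite expr1 mulr1 mul1r addr0 addrC subrK.
  by rewrite mul0r.
- by rewrite !addSn.
Qed.

Lemma poly_deg_le1_affine f : poly_deg_le 1 f ->
  exists (k : R) (a : 'I_d -> R), forall y : V, f y = k + \sum_(i < d) a i * y 0 i.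
Proof.
case=> N [c [e [e1 fE]]].
exists (\sum_(k < N) c k * (1 - \sum_(i < d) (e k i)%:R)).
exists (fun i => \sum_(k < N) c k * (e k i)%:R) => y.
under [X in _ = _ + X]eq_bigr => i _ do rewrite mulr_suml.
rewrite fE exchange_big -big_split; apply: eq_bigr => k _ /=.
rewrite prod_exprn_le1 ?e1 //.
under [X in _ = _ + X]eq_bigr => i _ do rewrite -mulrA.
rewrite -mulr_sumr -mulrDr; congr (_ * _).
rewrite addrAC -addrA -sumrB; congr (_ + _).
by apply: eq_bigr => i _; rewrite mulrBr mulr1.
Qed.

Lemma poly_deg_le1_partial f j x y : poly_deg_le 1 f -> partial j f x = partial j f y.
Proof.
case/poly_deg_le1_affine => k [a fE].
have -> : f = fun y => k + \sum_(i < d) a i * y 0 i by apply/funext.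
have Df z : is_derive z (unitv R j) (fun y : V => k + \sum_(i < d) a i * y 0 i)
    (0 + \sum_(i < d) a i * unitv R j 0 i).
  exact: is_deriveD (is_derive_cst _ _ _) (is_derive_lincomb a (fun i => is_derive_coord z _ i)).
by rewrite (partialE (Df x)) (partialE (Df y)).
Qed.

End polynomial_functions.

Section differential_operators.
Variables (R : realType) (d : nat) (A : set 'rV[R]_d).
Hypothesis Aopen : open A.
Local Notation V := 'rV[R]_d.
Implicit Types (f h u p : V -> R) (g : 'I_d -> 'I_d -> V -> R) (b : 'I_d -> V -> R) (x : V).

Definition derivable_on f := forall x i, A x -> derivable f x (unitv R i).

Definition derivable2_on f := derivable_on f /\ forall j, derivable_on (partial j f).

Definition diffop g b f : V -> R := fun x =>
  \sum_(i < d) \sum_(j < d) g i j x * partial i (partial j f) x +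
  \sum_(i < d) b i x * partial i f x.

Lemma diffopE g b f x : diffop g b f x =
  jetop (fun i j => g i j x) (fun i => b i x)
      (fun i j => partial i (partial j f) x) (fun i => partial i f x).
Proof. by []. Qed.

Definition divg g (i : 'I_d) : V -> R := fun x => \sum_(j < d) partial j (g i j) x.

Lemma near_eq_on f h x :
  (forall y, A y -> f y = h y) -> A x -> \forall y \near x, f y = h y.
Proof. by move=> fh Ax; apply: filterS (open_nbhs_nbhs (conj Aopen Ax)). Qed.

Lemma partial_eq_on f h j x :
  (forall y, A y -> f y = h y) -> A x -> partial j f x = partial j h x.
Proof. by move=> fh Ax; apply: near_eq_derive; apply: near_eq_on. Qed.

Lemma derivable_eq_on f h x v :
  (forall y, A y -> f y = h y) -> A x -> derivable f x v -> derivable h x v.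
Proof. by move=> fh Ax; apply: near_eq_derivable; apply: near_eq_on. Qed.

Lemma is_derive_eq_on f h x v (df : R) :
  (forall y, A y -> f y = h y) -> A x -> is_derive x v f df -> is_derive x v h df.
Proof. by move=> fh Ax; apply: near_eq_is_derive; apply: near_eq_on. Qed.

Lemma polyexpr_derivable2_on f : polyexpr f -> derivable2_on f.
Proof.
move=> pf; split=> [x i _|j x i _]; apply: polyexpr_derivable => //.
exact: polyexpr_partial.
Qed.

Lemma smooth_on_derivable2_on f : smooth_on A f -> derivable2_on f.
Proof.
move=> sf; split=> [x i Ax|j x i Ax]; apply: diff_derivable.
  exact: (sf [::] x Ax).
exact: (sf [:: j] x Ax).
Qed.

Lemma derivable2_on_ln p :
  derivable2_on p -> (forall y, A y -> 0 < p y) -> derivable2_on (fun y => ln (p y)).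
Proof.
move=> [dp d2p] ppos.
have lnD y j : A y ->
    is_derive y (unitv R j) (fun z => ln (p z)) ((p y)^-1 * partial j p y).
  by move=> Ay; apply: is_derive_comp (derivableP (dp y j Ay)) (is_derive1_ln (ppos y Ay)).
split=> [y i Ay|j x i Ax]; first by case: (lnD y i Ay).
apply: (@derivable_eq_on (fun y => (p y)^-1 * partial j p y) _ x _ _ Ax).
  by move=> y Ay; rewrite (partialE (lnD y j Ay)).
apply: derivableM (d2p j x i Ax); apply: derivableV (dp x i Ax).
by rewrite gt_eqF // ppos.
Qed.

Lemma derivable2_on_lincomb n (b : 'I_n -> R) (F : 'I_n -> V -> R) :
  (forall r, derivable2_on (F r)) -> derivable2_on (fun y => \sum_(r < n) b r * F r y).
Proof.
move=> F2; split=> [y i Ay|j x i Ax].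
  by case: (is_derive_lincomb b (fun r => derivableP ((F2 r).1 y i Ay))).
apply: (@derivable_eq_on (fun y => \sum_(r < n) b r * partial j (F r) y) _ x _ _ Ax).
  by move=> y Ay; rewrite partial_lincomb // => r; apply: (F2 r).1.
by case: (is_derive_lincomb b (fun r => derivableP ((F2 r).2 j x i Ax))).
Qed.

Lemma diffop_drift g rho f x :
  diffop g (drift g rho) f x =
  diffop g (divg g) f x + carre_du_champ g f (fun y => ln (rho y)) x.
Proof.
rewrite /diffop -addrA; congr (_ + _); rewrite -big_split; apply: eq_bigr => i _ /=.
rewrite /drift /divg !mulr_suml -big_split; apply: eq_bigr => j _ /=.
by rewrite mulrDl mulrAC.
Qed.

Lemma partial2M f h i j x : derivable2_on f -> derivable2_on h -> A x ->
  partial i (partial j (fun y => f y * h y)) x =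
  f x * partial i (partial j h) x + partial j h x * partial i f x +
  (h x * partial i (partial j f) x + partial j f x * partial i h x).
Proof.
move=> [df d2f] [dh d2h] Ax.
have E y : A y ->
    partial j (fun z => f z * h z) y = f y * partial j h y + h y * partial j f y.
  by move=> Ay; apply: partialM; [exact: df | exact: dh].
rewrite (partial_eq_on i E Ax).
have fi := df x i Ax; have hi := dh x i Ax.
have fji := d2f j x i Ax; have hji := d2h j x i Ax.
rewrite partialD; last 2 first.
- exact: (derivableM fi hji).
- exact: (derivableM hi fji).
by rewrite (partialM fi hji) (partialM hi fji).
Qed.

Lemma diffop_mul g b f h x : (forall i j, g i j x = g j i x) ->
  derivable2_on f -> derivable2_on h -> A x ->
  diffop g b (fun y => f y * h y) x =
  f x * diffop g b h x + h x * diffop g b f x + carre_du_champ g f h x *+ 2.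
Proof.
move=> gsym f2 h2 Ax; rewrite !diffopE.
transitivity (jetop (fun i j => g i j x) (fun i => b i x)
   (fun i j => f x * partial i (partial j h) x + partial j h x * partial i f x +
      (h x * partial i (partial j f) x + partial j f x * partial i h x))
   (fun i => f x * partial i h x + h x * partial i f x)).
  apply: eq_jetop => [i j|i]; first exact: partial2M.
  exact: partialM (f2.1 x i Ax) (h2.1 x i Ax).
exact: jetopM.
Qed.

Lemma is_derive_expR_on u h x j : (forall y, A y -> h y = expR (u y)) -> A x ->
  derivable u x (unitv R j) -> is_derive x (unitv R j) h (h x * partial j u x).
Proof.
move=> hE Ax du; rewrite hE //.
apply: (@is_derive_eq_on (expR \o u) h x _ _ _ Ax) => [y Ay|]; first by rewrite hE.
exact: is_derive_comp (derivableP du) (is_derive_expR _).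
Qed.

Lemma derivable2_on_expR u h :
  derivable2_on u -> (forall y, A y -> h y = expR (u y)) -> derivable2_on h.
Proof.
move=> [du d2u] hE; split=> [y i Ay|j x i Ax].
  by case: (is_derive_expR_on hE Ay (du y i Ay)).
apply: (@derivable_eq_on (fun y => h y * partial j u y) _ x _ _ Ax).
  by move=> y Ay; rewrite (partialE (is_derive_expR_on hE Ay (du y j Ay))).
apply: derivableM (d2u j x i Ax).
by case: (is_derive_expR_on hE Ax (du x i Ax)).
Qed.

Lemma partial2_expR u h i j x :
  derivable2_on u -> (forall y, A y -> h y = expR (u y)) -> A x ->
  partial i (partial j h) x =
  h x * partial i (partial j u) x + partial j u x * (h x * partial i u x).
Proof.
move=> [du d2u] hE Ax.
have E y : A y -> partial j h y = h y * partial j u y.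
  by move=> Ay; rewrite (partialE (is_derive_expR_on hE Ay (du y j Ay))).
have hi := is_derive_expR_on hE Ax (du x i Ax); have [hd _] := hi.
rewrite (partial_eq_on i E Ax) (partialM hd (d2u j x i Ax)).
by rewrite (partialE hi).
Qed.

Lemma diffop_expR g b u h x :
  derivable2_on u -> (forall y, A y -> h y = expR (u y)) -> A x ->
  diffop g b h x = h x * (diffop g b u x + carre_du_champ g u u x).
Proof.
move=> u2 hE Ax; rewrite !diffopE.
transitivity (jetop (fun i j => g i j x) (fun i => b i x)
   (fun i j => h x * partial i (partial j u) x + partial j u x * (h x * partial i u x))
   (fun i => h x * partial i u x)).
  apply: eq_jetop => [i j|i]; first exact: partial2_expR.
  exact: partialE (is_derive_expR_on hE Ax (u2.1 x i Ax)).
exact: jetop_exp.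
Qed.

Lemma carre_du_champ_expR g u h f x :
  derivable_on u -> (forall y, A y -> h y = expR (u y)) -> A x ->
  carre_du_champ g h f x = h x * carre_du_champ g u f x.
Proof.
move=> du hE Ax; rewrite /carre_du_champ mulr_sumr; apply: eq_bigr => i _.
rewrite mulr_sumr; apply: eq_bigr => j _.
by rewrite (partialE (is_derive_expR_on hE Ax (du x i Ax))) -!mulrA mulrCA.
Qed.

Lemma htransform_expR g b u h f x (lambda : R) : (forall i j, g i j x = g j i x) ->
  derivable2_on u -> derivable2_on f -> (forall y, A y -> h y = expR (u y)) -> A x ->
  diffop g b h x = lambda * h x ->
  htransform (diffop g b) h lambda f x = diffop g b f x + carre_du_champ g u f x *+ 2.
Proof.
move=> gsym u2 f2 hE Ax eig.
have hx0 : h x != 0 by rewrite hE // gt_eqF // expR_gt0.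
rewrite /htransform (diffop_mul b gsym (derivable2_on_expR u2 hE) f2 Ax) eig.
rewrite (carre_du_champ_expR _ _ u2.1 hE Ax).
move: (diffop g b f x) (carre_du_champ g u f x) => D Gu.
by field.
Qed.

Lemma diffop_divgE g u x :
  (forall i j y, A y -> g i j y = g j i y) -> (forall i j, derivable_on (g i j)) ->
  derivable2_on u -> A x ->
  diffop g (divg g) u x = \sum_(i < d) partial i (carre_du_champ g (fun y => y 0 i) u) x.
Proof.
move=> gsym dg [du d2u] Ax.
under [RHS]eq_bigr => i _ do rewrite carre_du_champ_coord.
transitivity (\sum_(i < d) \sum_(j < d)
   (g i j x * partial i (partial j u) x + partial j u x * partial i (g i j) x)); last first.
  apply: eq_bigr => i _; symmetry; apply: partialE; apply: is_derive_sum_fun => j.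
  exact: is_deriveM (derivableP (dg i j x i Ax)) (derivableP (d2u j x i Ax)).
rewrite diffopE; symmetry; apply: (@jetop_div _ _ _ (fun k i j => partial k (g i j) x)).
by move=> k i j; apply: partial_eq_on Ax => y Ay; apply: gsym.
Qed.

End differential_operators.

Lemma Lop_diffop (R : realType) (d n : nat) (g : 'I_d -> 'I_d -> 'rV[R]_d -> R)
    (P : 'I_n -> 'rV[R]_d -> R) (a : 'I_n -> R) :
  Lop g P a = diffop g (drift g (rho_of P a)).
Proof. by []. Qed.

Section polynomial_weights.
Variables (R : realType) (d n : nat) (Omega : set 'rV[R]_d).
Variables (g : 'I_d -> 'I_d -> 'rV[R]_d -> R) (P : 'I_n -> 'rV[R]_d -> R).
Variable L : 'I_d -> 'I_n -> 'rV[R]_d -> R.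
Hypotheses (Omega_open : open Omega) (gsym : forall i j x, Omega x -> g i j x = g j i x).
Hypotheses (gpoly : forall i j, polyexpr (g i j)) (Ppoly : forall r, polyexpr (P r)).
Hypothesis Ppos : forall r x, Omega x -> 0 < P r x.
Hypothesis Ldeg : forall i r, poly_deg_le 1 (L i r).
Hypothesis LE : forall i r x, Omega x ->
  carre_du_champ g (fun y => y 0 i) (fun y => ln (P r y)) x = L i r x.
Local Notation V := 'rV[R]_d.

Definition ell (b : 'I_n -> R) : V -> R := fun y => \sum_(r < n) b r * ln (P r y).

(* [L i r] is affine, so its partial derivatives do not depend on the point. *)
Definition divL (r : 'I_n) : R := \sum_(i < d) partial i (L i r) 0.

Lemma derivable2_on_lnP r : derivable2_on Omega (fun y => ln (P r y)).
Proof.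
apply: (derivable2_on_ln Omega_open) (Ppos r).
exact: polyexpr_derivable2_on.
Qed.

Lemma derivable2_on_ell b : derivable2_on Omega (ell b).
Proof. exact: (derivable2_on_lincomb Omega_open b derivable2_on_lnP). Qed.

Lemma rho_ell b y : Omega y -> rho_of P b y = expR (ell b y).
Proof.
move=> Oy; rewrite /rho_of /ell expR_sum; apply: eq_bigr => r _.
by rewrite /powR gt_eqF ?Ppos.
Qed.

Lemma partial_ell b j x : Omega x ->
  partial j (ell b) x = \sum_(r < n) b r * partial j (fun y => ln (P r y)) x.
Proof. by move=> Ox; apply: partial_lincomb => r; apply: (derivable2_on_lnP r).1. Qed.

Lemma carre_du_champ_ell_opp b f x : Omega x ->
  carre_du_champ g f (ell (fun r => - b r)) x = - carre_du_champ g f (ell b) x.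
Proof.
move=> Ox; rewrite /carre_du_champ -sumrN; apply: eq_bigr => i _.
rewrite -sumrN; apply: eq_bigr => j _.
rewrite (partial_ell _ j Ox) (partial_ell b j Ox) -mulrN -sumrN; congr (_ * _).
by apply: eq_bigr => r _; rewrite mulNr.
Qed.

Lemma Lop_ell a f x : Omega x ->
  Lop g P a f x = diffop g (divg g) f x + carre_du_champ g f (ell a) x.
Proof.
move=> Ox; rewrite Lop_diffop diffop_drift; congr (_ + _).
apply: eq_bigr => i _; apply: eq_bigr => j _; congr (_ * _).
by apply: (partial_eq_on Omega_open _ _ Ox) => y Oy; rewrite rho_ell // expRK.
Qed.

Lemma diffop_divg_ell b x : Omega x ->
  diffop g (divg g) (ell b) x = \sum_(r < n) b r * divL r.
Proof.
move=> Ox.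
have dg i j : derivable_on Omega (g i j) := (polyexpr_derivable2_on Omega (gpoly i j)).1.
rewrite (diffop_divgE Omega_open (fun i j y => gsym i j (x:=y)) dg (derivable2_on_ell b) Ox).
transitivity (\sum_(i < d) partial i (fun y => \sum_(r < n) b r * L i r y) x).
  apply: eq_bigr => i _; apply: (partial_eq_on Omega_open _ _ Ox) => y Oy.
  rewrite carre_du_champ_coord /=.
  under eq_bigr => j _ do rewrite (partial_ell b j Oy) mulr_sumr.
  rewrite exchange_big; apply: eq_bigr => r _.
  rewrite -(LE i r Oy) carre_du_champ_coord /= mulr_sumr.
  by apply: eq_bigr => j _; rewrite mulrCA.
rewrite /divL; under [RHS]eq_bigr => r _ do rewrite mulr_sumr.
rewrite exchange_big; apply: eq_bigr => i _.
rewrite partial_lincomb => [|r]; last exact/polyexpr_derivable/poly_deg_le_polyexpr/Ldeg.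
by apply: eq_bigr => r _; rewrite (poly_deg_le1_partial _ _ 0 (Ldeg i r)).
Qed.

Lemma Lop_rho_opp a x : Omega x ->
  Lop g P a (rho_of P (fun r => - a r)) x =
  - (\sum_(r < n) a r * divL r) * rho_of P (fun r => - a r) x.
Proof.
move=> Ox; have hE := rho_ell (fun r => - a r).
rewrite Lop_diffop (diffop_expR Omega_open _ _ (derivable2_on_ell _) hE Ox) -Lop_diffop.
rewrite Lop_ell // diffop_divg_ell // carre_du_champ_ell_opp // addrK.
under eq_bigr => r _ do rewrite mulNr.
by rewrite sumrN mulrC.
Qed.

Lemma htransform_Lop a f x : smooth_on Omega f -> Omega x ->
  htransform (Lop g P a) (rho_of P (fun r => - a r)) (- (\sum_(r < n) a r * divL r)) f x =
  Lop g P (fun r => - a r) f x.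
Proof.
move=> fs Ox; have gx i j : g i j x = g j i x := gsym i j Ox.
rewrite [Lop g P a]Lop_diffop (htransform_expR Omega_open gx (derivable2_on_ell _)
  (smooth_on_derivable2_on fs) (rho_ell _) Ox (Lop_rho_opp a Ox)) -Lop_diffop.
rewrite !Lop_ell // [carre_du_champ g (ell _) f x]carre_du_champC //.
by rewrite carre_du_champ_ell_opp // mulNrn mulr2n opprD addrA addrK.
Qed.

End polynomial_weights.

Theorem theorem4p2 (R : realType) (d n : nat) (Omega : set 'rV[R]_d)
  (g : 'I_d -> 'I_d -> 'rV[R]_d -> R) (P : 'I_n -> 'rV[R]_d -> R)
  (L : 'I_d -> 'I_n -> 'rV[R]_d -> R) :
  open Omega ->
  (forall i j x, Omega x -> g i j x = g j i x) ->
  (forall x, Omega x -> forall v : 'rV[R]_d, v != 0 ->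
       0 < \sum_(i < d) \sum_(j < d) v 0 i * g i j x * v 0 j) ->
  (forall i j, poly_deg_le 2 (g i j)) ->
  (forall r, poly_fun (P r)) ->
  (forall r x, Omega x -> 0 < P r x) ->
  (forall i r, poly_deg_le 1 (L i r)) ->
  (forall i r x, Omega x ->
       carre_du_champ g (fun y => y 0 i) (fun y => ln (P r y)) x = L i r x) ->
  exists c : 'I_n -> R, forall alpha : 'I_n -> R,
    let h := rho_of P (fun r => - alpha r) in
    let lambda := - (\sum_(r < n) alpha r * c r) in
    (forall x, Omega x -> Lop g P alpha h x = lambda * h x) /\
    (forall f, smooth_on Omega f -> forall x, Omega x ->
       htransform (Lop g P alpha) h lambda f x = Lop g P (fun r => - alpha r) f x).
Proof.
move=> Oopen gsym _ gdeg Pfun Ppos Ldeg LE.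
have gpoly i j : polyexpr (g i j) := poly_deg_le_polyexpr (gdeg i j).
have Ppoly r : polyexpr (P r) by have [m /poly_deg_le_polyexpr] := Pfun r.
exists (divL L) => a h lambda; rewrite {}/h {}/lambda; split.
- move=> x Ox; exact: (Lop_rho_opp Oopen gsym gpoly Ppoly Ppos Ldeg LE a Ox).
- move=> f fs x Ox; exact: (htransform_Lop Oopen gsym gpoly Ppoly Ppos Ldeg LE a fs Ox).
Qed.
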